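(* Let $(X,d)$ be a compact metric space with at least two points and $f_{1,\infty}$ a finitely generated commutative sequence of continuous surjective self-maps of $X$. If $(X,f_{1,\infty})$ is weakly mixing, then it is thickly sensitive.
   Context: Finitely generated: there is a finite set $F$ of continuous self-maps of $X$ with $f_i\in F$ for all $i$. Commutative: $f_i\circ f_j=f_j\circ f_i$ for all $i,j$. Write $f_1^n=f_n\circ\cdots\circ f_1$. Weakly mixing: for all non-empty open $U_1,U_2,V_1,V_2$ there is $n$ with $f_1^n(U_i)\cap V_i\ne\emptyset$, $i=1,2$. For open $U$ and $\delta>0$, $N_{f_{1,\infty}}(U,\delta)=\{n\in\mathbb{N}:\exists x,y\in U,\ d(f_1^n(x),f_1^n(y))>\delta\}$. A set $T\subseteq\mathbb{N}$ is thick if for every $p\in\mathbb{N}$ there is $n$ with $\{n,n+1,\dots,n+p\}\subseteq T$. Thickly sensitive: there is $\delta>0$ such that $N_{f_{1,\infty}}(U,\delta)$ is thick for every non-empty open $U\subseteq X$. *)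

From Stdlib Require Import Reals List.
Open Scope R_scope.

Definition is_metric {X : Type} (d : X -> X -> R) : Prop :=
  (forall x y, 0 <= d x y) /\
  (forall x y, d x y = 0 <-> x = y) /\
  (forall x y, d x y = d y x) /\
  (forall x y z, d x z <= d x y + d y z).

Definition ball {X : Type} (d : X -> X -> R) (x : X) (r : R) : X -> Prop :=
  fun y => d x y < r.

Definition is_open {X : Type} (d : X -> X -> R) (U : X -> Prop) : Prop :=
  forall x, U x -> exists eps, 0 < eps /\ forall y, ball d x eps y -> U y.

Definition nonempty {X : Type} (U : X -> Prop) : Prop := exists x, U x.

Definition is_compact {X : Type} (d : X -> X -> R) : Prop :=
  forall (I : Type) (U : I -> X -> Prop),
    (forall i, is_open d (U i)) ->
    (forall x, exists i, U i x) ->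
    exists l : list I, forall x, exists i, In i l /\ U i x.

Definition continuous_map {X : Type} (d : X -> X -> R) (g : X -> X) : Prop :=
  forall x eps, 0 < eps ->
    exists delta, 0 < delta /\ forall y, d x y < delta -> d (g x) (g y) < eps.

Definition surjective_map {X : Type} (g : X -> X) : Prop :=
  forall y, exists x, g x = y.

(* Indexing convention: f k stands for f_{k+1}, so the sequence f_1, f_2, ...
   is f 0, f 1, ....  comp_seq f n = f_n o ... o f_1  (= f_1^n), comp_seq f 0 = id. *)
Fixpoint comp_seq {X : Type} (f : nat -> X -> X) (n : nat) : X -> X :=
  match n with
  | O => fun x => x
  | S m => fun x => f m (comp_seq f m x)
  end.

Definition finitely_generated {X : Type} (d : X -> X -> R) (f : nat -> X -> X) : Prop :=
  exists F : list (X -> X),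
    (forall g, In g F -> continuous_map d g) /\ (forall i, In (f i) F).

Definition commutative_seq {X : Type} (f : nat -> X -> X) : Prop :=
  forall i j x, f i (f j x) = f j (f i x).

Definition weakly_mixing {X : Type} (d : X -> X -> R) (f : nat -> X -> X) : Prop :=
  forall U1 U2 V1 V2 : X -> Prop,
    is_open d U1 -> is_open d U2 -> is_open d V1 -> is_open d V2 ->
    nonempty U1 -> nonempty U2 -> nonempty V1 -> nonempty V2 ->
    exists n, (1 <= n)%nat /\
      (exists x, U1 x /\ V1 (comp_seq f n x)) /\
      (exists x, U2 x /\ V2 (comp_seq f n x)).

Definition sens_set {X : Type} (d : X -> X -> R) (f : nat -> X -> X)
    (U : X -> Prop) (delta : R) : nat -> Prop :=
  fun n => (1 <= n)%nat /\
    exists x y, U x /\ U y /\ d (comp_seq f n x) (comp_seq f n y) > delta.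

Definition thick (T : nat -> Prop) : Prop :=
  forall p : nat, exists n : nat, forall k, (k <= p)%nat -> T (n + k)%nat.

Definition thickly_sensitive {X : Type} (d : X -> X -> R) (f : nat -> X -> X) : Prop :=
  exists delta, 0 < delta /\
    forall U : X -> Prop, is_open d U -> nonempty U -> thick (sens_set d f U delta).

(* Weak mixing of a commutative sequence propagates to every finite family of
   pairs of nonempty open sets: merging two pairs (U1,V1), (U2,V2) through a
   time m that serves both gives the single pair (U1 ∩ f^-m U2, V1 ∩ f^-m V2),
   and commutativity moves f^m past f^n.  Fix two points a ≠ b with D = d a b.
   Given U and p, every block f_{n+k} ∘ ... ∘ f_{n+1} with k ≤ p is one of the
   finitely many words of length ≤ p over the generators, so one common time n
   sends points of U close to a and close to b after each such block; hence
   f^{n+k} separates U by more than D/3 for all k ≤ p. *)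
From Stdlib Require Import Reals List Classical Lia Lra.
Import ListNotations.
Open Scope R_scope.

Lemma exists_list_filter {A : Type} (P : A -> Prop) (l : list A) :
  exists l', forall x, In x l' <-> In x l /\ P x.
Proof.
  induction l as [|a l [l' Hl']].
  - exists []; simpl; tauto.
  - destruct (classic (P a)) as [Pa|nPa].
    + exists (a :: l'); intro x; simpl; rewrite Hl'.
      split; [intros [<-|]; tauto | intros [[<-|] Px]; auto].
    + exists l'; intro x; simpl; rewrite Hl'.
      split; [tauto | intros [[<-|] Px]; [contradiction | auto]].
Qed.

Section Maps.
Variable X : Type.
Variable d : X -> X -> R.

Lemma is_open_preimage (U : X -> Prop) (g : X -> X) :
  is_open d U -> continuous_map d g -> is_open d (fun x => U (g x)).
Proof.
  intros HU Hg x Ux.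
  destruct (HU _ Ux) as [e [e_pos He]].
  destruct (Hg x e e_pos) as [r [r_pos Hr]].
  exists r; split; auto.
  intros y Hy; apply He, Hr, Hy.
Qed.

Lemma is_open_and (U V : X -> Prop) :
  is_open d U -> is_open d V -> is_open d (fun x => U x /\ V x).
Proof.
  intros HU HV x [Ux Vx].
  destruct (HU _ Ux) as [e1 [e1_pos H1]], (HV _ Vx) as [e2 [e2_pos H2]].
  exists (Rmin e1 e2); split; [apply Rmin_glb_lt; auto|].
  intros y Hy; unfold ball in *.
  pose proof (Rmin_l e1 e2); pose proof (Rmin_r e1 e2).
  split; [apply H1 | apply H2]; unfold ball; lra.
Qed.

Lemma is_open_ball (a : X) (r : R) : is_metric d -> is_open d (ball d a r).
Proof.
  intros (_ & _ & _ & tri) y Hy; unfold ball in *.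
  exists (r - d a y); split; [lra|].
  intros z Hz; pose proof (tri a y z); lra.
Qed.

Lemma far_from_centers (a b u v : X) (r : R) : is_metric d ->
  d a u < r -> d b v < r -> d a b - 2 * r < d u v.
Proof.
  intros (_ & _ & sym & tri) Hu Hv.
  pose proof (tri a u b); pose proof (tri u v b); rewrite (sym v b) in *; lra.
Qed.

Lemma continuous_map_comp (g h : X -> X) :
  continuous_map d g -> continuous_map d h -> continuous_map d (fun x => g (h x)).
Proof.
  intros Hg Hh x e e_pos.
  destruct (Hg (h x) e e_pos) as [e1 [e1_pos H1]].
  destruct (Hh x e1 e1_pos) as [e2 [e2_pos H2]].
  exists e2; split; auto.
Qed.

Lemma continuous_comp_seq (g : nat -> X -> X) :
  (forall i, continuous_map d (g i)) -> forall n, continuous_map d (comp_seq g n).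
Proof.
  intros Hg n; induction n as [|n IHn]; simpl.
  - intros x e e_pos; exists e; split; auto.
  - apply continuous_map_comp; auto.
Qed.

Lemma surjective_comp_seq (g : nat -> X -> X) :
  (forall i, surjective_map (g i)) -> forall n, surjective_map (comp_seq g n).
Proof.
  intros Hg n; induction n as [|n IHn]; simpl; intro y.
  - exists y; reflexivity.
  - destruct (Hg n y) as [z <-]; destruct (IHn z) as [x <-]; exists x; reflexivity.
Qed.

Lemma comp_seq_add (g : nat -> X -> X) (n k : nat) (x : X) :
  comp_seq g (n + k) x = comp_seq (fun i => g (n + i)%nat) k (comp_seq g n x).
Proof.
  induction k as [|k IHk]; simpl; [now rewrite Nat.add_0_r|].
  now rewrite Nat.add_succ_r; simpl; rewrite IHk.
Qed.

Lemma comp_seq_comm (g : nat -> X -> X) : commutative_seq g ->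
  forall m n x, comp_seq g m (comp_seq g n x) = comp_seq g n (comp_seq g m x).
Proof.
  intros Hc.
  assert (step : forall i n x, g i (comp_seq g n x) = comp_seq g n (g i x)).
  { intros i n; induction n as [|n IHn]; intro x; simpl; auto.
    now rewrite Hc, IHn. }
  intros m; induction m as [|m IHm]; intros n x; simpl; auto.
  now rewrite IHm, step.
Qed.

Fixpoint words (F : list (X -> X)) (k : nat) : list (X -> X) :=
  match k with
  | O => [fun x => x]
  | S k => flat_map (fun w => map (fun s x => s (w x)) F) (words F k)
  end.

Lemma comp_seq_in_words (F : list (X -> X)) (g : nat -> X -> X) :
  (forall i, In (g i) F) -> forall k, In (comp_seq g k) (words F k).
Proof.
  intros HgF k; induction k as [|k IHk]; simpl; [now left|].
  apply in_flat_map; exists (comp_seq g k); split; auto.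
  apply in_map_iff; exists (g k); split; auto.
Qed.

Lemma comp_seq_in_words_upto (F : list (X -> X)) (g : nat -> X -> X) (p k : nat) :
  (forall i, In (g i) F) -> (k <= p)%nat ->
  In (comp_seq g k) (flat_map (words F) (seq 0 (S p))).
Proof.
  intros HgF Hk; apply in_flat_map; exists k; split.
  - apply in_seq; lia.
  - now apply comp_seq_in_words.
Qed.

End Maps.

Section WeakMixing.
Variable X : Type.
Variable d : X -> X -> R.
Variable f : nat -> X -> X.
Hypothesis f_cont : forall i, continuous_map d (f i).
Hypothesis f_comm : commutative_seq f.
Hypothesis f_wm : weakly_mixing d f.

Definition open_pair (P : (X -> Prop) * (X -> Prop)) : Prop :=
  is_open d (fst P) /\ is_open d (snd P) /\ nonempty (fst P) /\ nonempty (snd P).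

Definition hits (n : nat) (P : (X -> Prop) * (X -> Prop)) : Prop :=
  exists x, fst P x /\ snd P (comp_seq f n x).

Lemma open_pair_preimage_ball (U : X -> Prop) (h : X -> X) (c : X) (r : R) :
  is_metric d -> 0 < r -> is_open d U -> nonempty U ->
  continuous_map d h -> surjective_map h ->
  open_pair (U, fun z => ball d c r (h z)).
Proof.
  intros Hm r_pos U_open U_ne h_cont h_surj; repeat split; simpl; auto.
  - apply is_open_preimage; auto; now apply is_open_ball.
  - destruct (h_surj c) as [z Hz]; exists z; unfold ball; rewrite Hz.
    destruct Hm as (_ & sep & _); now rewrite (proj2 (sep c c) eq_refl).
Qed.

Lemma weakly_mixing_cons (l : list ((X -> Prop) * (X -> Prop))) :
  forall P, (forall Q, In Q (P :: l) -> open_pair Q) ->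
  exists n, (1 <= n)%nat /\ forall Q, In Q (P :: l) -> hits n Q.
Proof.
  induction l as [|P2 l IH]; intros P Hl.
  - destruct (Hl P (or_introl eq_refl)) as (U1 & V1 & neU & neV).
    destruct (f_wm _ _ _ _ U1 U1 V1 V1 neU neU neV neV) as [n [n_pos [hitP _]]].
    exists n; split; auto; intros Q [<-|[]]; exact hitP.
  - destruct (Hl P (or_introl eq_refl)) as (U1 & V1 & neU1 & neV1).
    destruct (Hl P2 (or_intror (or_introl eq_refl))) as (U2 & V2 & neU2 & neV2).
    destruct (f_wm _ _ _ _ U1 V1 U2 V2 neU1 neV1 neU2 neV2)
      as [m [_ [[x [Ux Ux']] [y [Vy Vy']]]]].
    set (merged := ((fun z => fst P z /\ fst P2 (comp_seq f m z)),
                    (fun z => snd P z /\ snd P2 (comp_seq f m z)))).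
    assert (merged_open : open_pair merged).
    { pose proof (continuous_comp_seq X d f f_cont m).
      repeat split; simpl.
      - apply is_open_and; [|apply is_open_preimage]; auto.
      - apply is_open_and; [|apply is_open_preimage]; auto.
      - now exists x.
      - now exists y. }
    destruct (IH merged) as [n [n_pos Hn]].
    { intros Q [<-|HQ]; auto; apply Hl; simpl; auto. }
    exists n; split; auto.
    destruct (Hn merged (or_introl eq_refl)) as [z [[Pz P2z] [Pnz P2nz]]].
    intros Q [<-|[<-|HQ]]; [now exists z| |apply Hn; simpl; auto].
    (* the witness for the second pair is f^m z, since f^n f^m = f^m f^n *)
    exists (comp_seq f m z); split; auto.
    now rewrite comp_seq_comm.
Qed.

Lemma weakly_mixing_common_time (l : list ((X -> Prop) * (X -> Prop))) :
  (forall Q, In Q l -> open_pair Q) ->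
  exists n, (1 <= n)%nat /\ forall Q, In Q l -> hits n Q.
Proof.
  destruct l as [|P l]; [exists 1%nat; split; [lia | intros Q []]|].
  apply weakly_mixing_cons.
Qed.

End WeakMixing.

Theorem mainTheorem14 (X : Type) (d : X -> X -> R) (f : nat -> X -> X) :
  is_metric d ->
  is_compact d ->
  (exists x y : X, x <> y) ->
  finitely_generated d f ->
  commutative_seq f ->
  (forall i, continuous_map d (f i)) ->
  (forall i, surjective_map (f i)) ->
  weakly_mixing d f ->
  thickly_sensitive d f.
Proof.
  intros Hm _ [a [b a_ne_b]] [F [_ f_in_F]] Hc Hcont Hsurj Hwm.
  set (D := d a b).
  assert (D_pos : 0 < D).
  { destruct Hm as (pos & sep & _); destruct (pos a b) as [|E]; auto.
    now destruct a_ne_b; apply sep. }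
  exists (D / 3); split; [lra|].
  intros U U_open U_ne p.
  set (near c (h : X -> X) := (U, fun z => ball d c (D / 3) (h z))).
  (* F may contain maps that are not surjective, whose preimages of balls can
     be empty; only the genuine open pairs are kept. *)
  destruct (exists_list_filter (open_pair X d)
              (flat_map (fun h => [near a h; near b h])
                        (flat_map (words X F) (seq 0 (S p)))))
    as [pairs Hpairs].
  destruct (weakly_mixing_common_time X d f Hcont Hc Hwm pairs)
    as [n [n_pos Hn]]; [now intros Q HQ; apply Hpairs in HQ|].
  exists n; intros k Hk; split; [lia|].
  set (h := comp_seq (fun i => f (n + i)%nat) k).
  assert (near_hits : forall c, c = a \/ c = b -> hits X f n (near c h)).
  { intros c Hc'; apply Hn, Hpairs; split.
    - apply in_flat_map; exists h; split.
      + now apply comp_seq_in_words_upto.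
      + destruct Hc' as [->| ->]; simpl; auto.
    - apply open_pair_preimage_ball; auto; [lra | |].
      + now apply continuous_comp_seq.
      + now apply surjective_comp_seq. }
  destruct (near_hits a (or_introl eq_refl)) as [x [Ux Hx]].
  destruct (near_hits b (or_intror eq_refl)) as [y [Uy Hy]].
  exists x, y; repeat split; auto.
  rewrite !comp_seq_add; fold h.
  pose proof (far_from_centers X d a b _ _ (D / 3) Hm Hx Hy); unfold D in *; lra.
Qed.
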